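(* Fix a finite alphabet $\Sigma$ containing the space character and the dash character. Let $\Gamma_1,\ldots,\Gamma_m$ be finite sets of attribute constraints over a fixed namespace $s$ and attribute name $a$. Then there is a bound $N$, polynomial in the total size of $\Gamma_1,\ldots,\Gamma_m$, such that for every subsequence $\Gamma_{i_1},\ldots,\Gamma_{i_k}$ ($i_1<\cdots<i_k$): if there are pairwise distinct words $w_1,\ldots,w_k\in\Sigma^*$ such that each $w_j$ satisfies all constraints in $\Gamma_{i_j}$, then there are pairwise distinct words $w_1,\ldots,w_k\in\Sigma^*$ such that each $w_j$ satisfies all constraints in $\Gamma_{i_j}$ and $|w_j|\le N$ for all $j$.
   Context: An attribute constraint over $s$ and $a$ is either $[s|a\ op\ w]$ or its negation $:\!not([s|a\ op\ w])$, where $w\in\Sigma^*$ and $op\in\{=,\ \tilde{}=,\ |=,\ \hat{}=,\ \$=,\ *=\}$. A word $x\in\Sigma^*$ (the attribute value) satisfies $[s|a=w]$ iff $x=w$; $[s|a\ \tilde{}=w]$ iff $x$ is one of $w$, $w\,\text{␣}\,w'$, $w'\,\text{␣}\,w$, $w_1\,\text{␣}\,w\,\text{␣}\,w_2$ for some words $w',w_1,w_2$ (␣ the space character); $[s|a\ |=w]$ iff $x=w$ or $x=w-w'$ for some $w'$ ($-$ the dash character); $[s|a\ \hat{}=w]$ iff $w$ is a prefix of $x$; $[s|a\ \$=w]$ iff $w$ is a suffix of $x$; $[s|a\ *=w]$ iff $w$ is a factor of $x$. It satisfies $:\!not(c)$ iff it does not satisfy $c$. *)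

From HB Require Import structures.
From mathcomp Require Import all_boot.
Set Implicit Arguments. Unset Strict Implicit. Unset Printing Implicit Defensive.

(* Operators of attribute constraints [s|a op w]:
   =, ~=, |=, ^=, $=, *=  *)
Inductive attr_op := OpEq | OpTilde | OpDash | OpPrefix | OpSuffix | OpFactor.

Definition attr_op_eqb (o1 o2 : attr_op) : bool :=
  match o1, o2 with
  | OpEq, OpEq | OpTilde, OpTilde | OpDash, OpDash
  | OpPrefix, OpPrefix | OpSuffix, OpSuffix | OpFactor, OpFactor => true
  | _, _ => false
  end.
Lemma attr_op_eqP : Equality.axiom attr_op_eqb.
Proof. by case; case; constructor. Qed.
HB.instance Definition _ := hasDecEq.Build attr_op attr_op_eqP.

Section Constraints.
Variable T : eqType.
Variables (sp dash : T).

(* An attribute constraint over the fixed namespace s and attribute name a: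
   (pos, op, w) stands for [s|a op w] if pos = true, and for
   :not([s|a op w]) if pos = false.  Since s and a are fixed they are
   left implicit. *)
Definition attr_constraint := (bool * attr_op * seq T)%type.

Definition sat_atom (op : attr_op) (w x : seq T) : Prop :=
  match op with
  | OpEq => x = w
  | OpTilde => x = w \/ (exists w', x = w ++ sp :: w') \/
               (exists w', x = w' ++ sp :: w) \/
               (exists w1 w2, x = w1 ++ sp :: w ++ sp :: w2)
  | OpDash => x = w \/ exists w', x = w ++ dash :: w'
  | OpPrefix => exists y, x = w ++ y
  | OpSuffix => exists y, x = y ++ w
  | OpFactor => exists y z, x = y ++ w ++ z
  end.

Definition sat (x : seq T) (c : attr_constraint) : Prop :=
  let: (pos, op, w) := c in
  if pos then sat_atom op w x else ~ sat_atom op w x.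

Definition sat_all (x : seq T) (G : seq attr_constraint) : Prop :=
  forall c, c \in G -> sat x c.

(* Size of a constraint: length of its word plus one (for the operator). *)
Definition constraint_size (c : attr_constraint) : nat := (size c.2).+1.

Definition set_size (G : seq attr_constraint) : nat :=
  \sum_(c <- G) constraint_size c.

Definition total_size (Gs : seq (seq attr_constraint)) : nat :=
  \sum_(G <- Gs) (set_size G).+1.

Definition distinct_solution (S : seq (seq attr_constraint)) (ws : seq (seq T))
  : Prop :=
  size ws = size S /\ uniq ws /\
  (forall j, j < size S -> sat_all (nth [::] ws j) (nth [::] S j)).

End Constraints.

From mathcomp Require Import all_boot zify.

(* A word x longer than w satisfies [s|a op w] or not according to its prefix
   and suffix of length |w| + 1 and to whether it contains the factor w (for
   *=) or ␣w␣ (for ~=) -- the pattern of the constraint.  Call the state of a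
   word the longest suffix of it that is a prefix of a pattern; there are
   O(|Γ|) states.  In a solution x of Γ, fix one occurrence of each pattern:
   among |Γ| + 1 disjoint windows of length W, W at least the number of
   states, one meets none of them, and inside it two cut points i < j give
   prefixes with the same state.  Deleting x[i, j) keeps the
   fixed occurrences and, the states being equal, creates no new one, so the
   shorter word still solves Γ and has lost at most W letters.  Hence beyond a
   polynomial threshold every window (t - W, t] of lengths contains a solution,
   which gives as many distinct short solutions as needed; a greedy pass then
   replaces each long w_j by a short solution not used elsewhere. *)

Set Implicit Arguments. Unset Strict Implicit. Unset Printing Implicit Defensive.

Lemma exists_small_notin (s : seq nat) : exists2 t, t <= size s & t \notin s.
Proof.
have /allPn [t] : ~~ all (mem s) (iota 0 (size s).+1).
  apply/negP => /allP sub.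
  by have := uniq_leq_size (iota_uniq 0 (size s).+1) sub; rewrite size_iota ltnn.
by rewrite mem_iota add0n ltnS => /andP [_ ts] tn; exists t.
Qed.

Lemma exists_collision (S : eqType) (f : nat -> S) (r : seq S) p W :
  size r <= W -> (forall k, f k \in r) ->
  exists i j, [/\ p <= i, i < j, j <= p + W & f i = f j].
Proof.
move=> rW fr; have : ~~ uniq [seq f k | k <- iota p W.+1].
  apply: contraL rW => /uniq_leq_size; rewrite -ltnNge size_map size_iota.
  by apply=> _ /mapP [k _ ->].
case/(uniqPn (f 0)) => i [j] [ij]; rewrite size_map size_iota => jW.
have iW := ltn_trans ij jW.
rewrite !(nth_map 0) ?size_iota ?nth_iota // => E.
by exists (p + i), (p + j); split => //; lia.
Qed.

Section Words.
Variable T : eqType.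
Implicit Types (a b c s u w x y : seq T) (F : seq (seq T)).

Lemma cat_eq_cat (s1 s2 t1 t2 : seq T) : s1 ++ s2 = t1 ++ t2 ->
  exists m, (s1 = t1 ++ m /\ t2 = m ++ s2) \/ (t1 = s1 ++ m /\ s2 = m ++ t2).
Proof.
elim: s1 t1 => [|x s1 IH] [|y t1] /=.
- by move=> ->; exists [::]; left.
- by move=> ->; exists (y :: t1); right.
- by move=> <-; exists (x :: s1); left.
- by case=> -> /IH [m [[-> ->]|[-> ->]]]; exists m; [left|right].
Qed.

Lemma infix_catP u a c : infix u (a ++ c) ->
  [\/ infix u a, infix u c |
      exists a2 c1, [/\ suffix a2 a, prefix c1 c & u = a2 ++ c1]].
Proof.
case/infixP=> y [z] /cat_eq_cat [m [[-> /cat_eq_cat [m' [[-> ->]|[-> _]]]]|[_ ->]]].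
- by constructor 3; exists m, m'; rewrite suffix_suffix prefix_prefix.
- by constructor 1; rewrite infix_infix.
- by constructor 2; rewrite infix_infix.
Qed.

Lemma infix_take_drop n i x : infix (take n (drop i x)) x.
Proof.
by have := infix_infix (take i x) (take n (drop i x)) (drop n (drop i x));
  rewrite !cat_take_drop.
Qed.

Lemma take_infix_index u x :
  infix u x -> take (size u) (drop (infix_index u x) x) = u.
Proof. by rewrite infixE => /eqP. Qed.

Lemma prefix_cat_le u a s : size u <= size a -> prefix u (a ++ s) = prefix u a.
Proof. by move=> ua; rewrite !prefixE takel_cat. Qed.

Lemma suffix_cat_le u s c : size u <= size c -> suffix u (s ++ c) = suffix u c.
Proof. by move=> uc; rewrite -!prefix_rev rev_cat prefix_cat_le ?size_rev. Qed.

Lemma prefix_rconsP w z x :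
  reflect (exists w', x = w ++ z :: w') (prefix (rcons w z) x).
Proof.
apply: (iffP idP) => [/prefixP [w' ->]|[w' ->]]; first by exists w'; rewrite cat_rcons.
by rewrite -cat_rcons prefix_prefix.
Qed.

Lemma cat_take_drop_take i j x : i <= j -> take i x ++ drop i (take j x) = take j x.
Proof. by move=> ij; rewrite -{1}(take_takel x ij) cat_take_drop. Qed.

Definition state F y :=
  drop (find (fun i => has (prefix (drop i y)) F) (iota 0 (size y))) y.

Definition prefixes F := [::] :: [seq take k u | u <- F, k <- iota 0 (size u).+1].

Lemma suffix_state F y : suffix (state F y) y.
Proof. exact: suffix_drop. Qed.

Lemma suffix_state_max F y s : has (prefix s) F -> suffix s y -> suffix s (state F y).
Proof.
move=> Fs /suffixP [z Ey]; have Es : s = drop (size z) y by rewrite Ey drop_size_cat.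
have [zy|yz] := ltnP (size z) (size y); last by rewrite Es drop_oversize ?suffix0s.
rewrite Es /state; set f := find _ _.
have fz : f <= size z.
  rewrite leqNgt; apply/negP => /(before_find 0).
  by rewrite nth_iota // add0n -Es Fs.
by rewrite -(subnK fz) -drop_drop suffix_drop.
Qed.

Lemma state_in_prefixes F y : state F y \in prefixes F.
Proof.
rewrite /state; set P := (fun i => _).
have [HP|HP] := boolP (has P (iota 0 (size y))); last first.
  by rewrite (hasNfind HP) size_iota drop_size mem_head.
have lt : find P (iota 0 (size y)) < size y.
  by rewrite -[X in _ < X](size_iota 0) -has_find.
move: (nth_find 0 HP); rewrite nth_iota // add0n.
case/hasP => u Fu /prefixP [v Eu]; set s := drop _ y in Eu *.
rewrite inE; apply/orP; right; apply/allpairsPdep; exists u, (size s).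
by rewrite Fu mem_iota Eu take_size_cat // size_cat; split => //; lia.
Qed.

Lemma size_prefixes F : size (prefixes F) = (sumn [seq (size u).+1 | u <- F]).+1.
Proof.
rewrite /= size_flatten /shape -map_comp; congr (sumn _).+1.
by apply: eq_map => u /=; rewrite size_map size_iota.
Qed.

Lemma infix_pump F u a b c : u \in F -> state F (a ++ b) = state F a ->
  infix u (a ++ c) -> infix u (a ++ b ++ c).
Proof.
move=> Fu Est /infix_catP [ua|uc|[a2 [c1 [a2a /prefixP [z ->] Eu]]]].
- exact: infix_catr.
- by rewrite catA; apply: infix_catl.
- have : suffix a2 (a ++ b).
    apply: (@suffix_trans _ (state F (a ++ b))); last exact: suffix_state.
    rewrite Est; apply: suffix_state_max a2a.
    by apply/hasP; exists u; rewrite // Eu prefix_prefix.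
  by case/suffixP => p; rewrite catA => ->; rewrite Eu -catA (catA a2) infix_infix.
Qed.

Lemma infix_avoid_window F x m W : {in F, forall u, size u <= m} ->
  exists2 p, m <= p /\ p + W <= (size F).+1 * (W + m) &
    {in F, forall u, infix u x -> infix u (take p x) || infix u (drop (p + W) x)}.
Proof.
(* The windows [m + t B, m + t B + W) with B = W + m are m apart, so the first
   occurrence of u, of length at most m, can only meet the window t for
   t = (e - m) %/ B, e being its last position. *)
move=> Fm; set B := W + m.
have [t tF tnotin] :=
  exists_small_notin [seq ((infix_index u x + size u).-1 - m) %/ B | u <- F].
rewrite size_map in tF; have tB := leq_mul tF (leqnn B).
exists (m + t * B); first by split; rewrite ?mulSn; lia.
move=> u Fu ux; have Eu := take_infix_index ux; set s := infix_index u x in Eu tnotin.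
have um := Fm u Fu.
have [before|ends_late] := leqP (s + size u) (m + t * B).
  rewrite addnC in before.
  apply/orP; left; rewrite -Eu take_drop -(take_takel x before) -take_drop.
  exact: infix_take_drop.
have [after|inside] := leqP (m + t * B + W) s.
  apply/orP; right; rewrite -Eu -(subnK after) -drop_drop.
  exact: infix_take_drop.
case/negP: tnotin; apply/mapP; exists u => //; apply/eqP.
have B0 : 0 < B by lia.
rewrite -/s eqn_leq leq_divRL // -[_ %/ _ <= t]ltnS ltn_divLR // mulSn.
by apply/andP; split; lia.
Qed.

Lemma infix_cut F m W x : {in F, forall u, size u <= m} -> size (prefixes F) <= W ->
  (size F).+1 * (W + m) + m <= size x ->
  exists i j, [/\ m <= i < j, j <= i + W, j + m <= size x &
    {in F, forall u, infix u (take i x ++ drop j x) = infix u x}].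
Proof.
move=> Fm FW xlong.
have [p [mp pW] avoid] := infix_avoid_window x W Fm.
have [i [j [pi ij jp Est]]] :=
  exists_collision p FW (fun k => state_in_prefixes F (take k x)).
exists i, j; split; [lia | lia | lia | move=> u Fu; apply/idP/idP].
  have Ex : take i x ++ drop i (take j x) ++ drop j x = x.
    by rewrite catA cat_take_drop_take ?cat_take_drop // ltnW.
  move/(infix_pump (b := drop i (take j x)) Fu).
  by rewrite Ex cat_take_drop_take ?(ltnW ij) // Est; apply.
case/(avoid u Fu)/orP => [ul|ur].
  apply: infix_catr; apply: (infix_prefix_trans ul).
  by rewrite -(take_takel x pi) prefix_take.
apply: infix_catl; apply: (infix_suffix_trans ur).
by rewrite -(subnK jp) -drop_drop suffix_drop.
Qed.

End Words.

Section Representatives.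
Variables (A X : eqType) (a0 : A) (x0 : X).
Variables (P : A -> X -> Prop) (small : pred X) (K : nat).

Definition has_small_alternatives (G : A) :=
  forall x, P G x -> ~~ small x ->
  exists ys, [/\ K <= size ys, uniq ys & forall y, y \in ys -> P G y /\ small y].

Lemma small_representatives (Ss : seq A) (pre ws : seq X) :
  {in Ss, forall G, has_small_alternatives G} ->
  size pre + size Ss <= K -> all small pre -> size ws = size Ss -> uniq (pre ++ ws) ->
  (forall j, j < size Ss -> P (nth a0 Ss j) (nth x0 ws j)) ->
  exists ws', [/\ size ws' = size Ss, uniq (pre ++ ws'), all small ws' &
    forall j, j < size Ss -> P (nth a0 Ss j) (nth x0 ws' j)].
Proof.
elim: Ss pre ws => [|G Ss IH] pre ws alt preK spre wsS uws Pws.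
  by exists [::]; move/size0nil: wsS uws => ->.
case: ws wsS uws Pws => // w ws [wsS] uws Pws; rewrite /= in preK.
move: uws; rewrite (uniq_catCA pre [:: w]) cons_uniq => /andP [wfresh uws].
have [y [Gy sy yfresh]] : exists y, [/\ P G y, small y & y \notin pre ++ ws].
  have [sw|nsw] := boolP (small w); first by exists w; split => //; exact: (Pws 0).
  have [ys [Kys uys ysG]] := alt G (mem_head _ _) w (Pws 0 isT) nsw.
  have /allPn [y yys yfresh] : ~~ all (mem (pre ++ ws)) ys.
    by apply/negP => /allP /(uniq_leq_size uys); rewrite size_cat wsS /=; lia.
  by have [Gy sy] := ysG y yys; exists y.
have alt' : {in Ss, forall G, has_small_alternatives G}.
  by move=> G' G'Ss; apply: alt; rewrite inE G'Ss orbT.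
have preK' : size (rcons pre y) + size Ss <= K by rewrite size_rcons; lia.
have spre' : all small (rcons pre y) by rewrite all_rcons sy.
have uws' : uniq (rcons pre y ++ ws).
  by rewrite cat_rcons (uniq_catCA pre [:: y]) cons_uniq yfresh.
have [ws' [wsS' uws'' sws' Pws']] :=
  IH (rcons pre y) ws alt' preK' spre' wsS uws' (fun j => Pws j.+1).
exists (y :: ws'); split => /=.
- by rewrite wsS'.
- by rewrite -cat_rcons.
- by rewrite sy sws'.
- by case.
Qed.

End Representatives.

Section Constraints.
Variables (T : eqType) (sp dash : T).
Implicit Types (a b c w x : seq T) (G : seq (attr_constraint T)).

Definition sat_atomb op w x : bool :=
  match op with
  | OpEq => x == w
  | OpTilde => [|| x == w, prefix (rcons w sp) x, suffix (sp :: w) x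
                 | infix (sp :: rcons w sp) x]
  | OpDash => (x == w) || prefix (rcons w dash) x
  | OpPrefix => prefix w x
  | OpSuffix => suffix w x
  | OpFactor => infix w x
  end.

Lemma sat_atomP op w x : reflect (sat_atom sp dash op w x) (sat_atomb op w x).
Proof.
case: op => /=.
- exact: eqP.
- apply: (iffP or4P) => [[/eqP|/prefix_rconsP|/suffixP|/infixP [w1 [w2 ->]]]|].
  + by left.
  + by right; left.
  + by right; right; left.
  + by right; right; right; exists w1, w2; rewrite /= cat_rcons.
  + case=> [/eqP|[/prefix_rconsP|[/suffixP|[w1 [w2 ->]]]]];
      [exact: Or41|exact: Or42|exact: Or43|].
    by apply/Or44/infixP; exists w1, w2; rewrite /= cat_rcons.
- by apply: (iffP orP) => [[/eqP|/prefix_rconsP]|[/eqP|/prefix_rconsP]] H;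
    [left|right|left|right].
- exact: prefixP.
- exact: suffixP.
- exact: infixP.
Qed.

Lemma satE x (k : attr_constraint T) :
  sat sp dash x k <-> sat_atomb k.1.2 k.2 x = k.1.1.
Proof.
case: k => [[[] op] w] /=; first exact: rwP (sat_atomP op w x).
by split => [/(introN (sat_atomP op w x))/negbTE|/negbT/(elimN (sat_atomP op w x))].
Qed.

Definition infix_pattern op w := if op is OpTilde then sp :: rcons w sp else w.

Definition patterns G := [seq infix_pattern k.1.2 k.2 | k <- G].

Lemma sat_atomb_cut op w a b b' c : size w < size a -> size w < size c ->
  infix (infix_pattern op w) (a ++ b ++ c) = infix (infix_pattern op w) (a ++ b' ++ c) ->
  sat_atomb op w (a ++ b ++ c) = sat_atomb op w (a ++ b' ++ c).
Proof.
move=> wa wc; have neq b0 : a ++ b0 ++ c != w.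
  by apply/eqP => E; move: wa; rewrite -E !size_cat; lia.
have pre b0 u : size u <= (size w).+1 -> prefix u (a ++ b0 ++ c) = prefix u a.
  by move=> uw; rewrite prefix_cat_le //; exact: leq_trans uw wa.
have suf b0 u : size u <= (size w).+1 -> suffix u (a ++ b0 ++ c) = suffix u c.
  by move=> uw; rewrite catA suffix_cat_le //; exact: leq_trans uw wc.
by case: op => /= E; rewrite ?(negbTE (neq _)) ?pre ?suf ?E ?size_rcons.
Qed.

Lemma sat_all_cut G m a b b' c :
  {in G, forall k, size k.2 < m} -> m <= size a -> m <= size c ->
  {in G, forall k, infix (infix_pattern k.1.2 k.2) (a ++ b ++ c) =
                   infix (infix_pattern k.1.2 k.2) (a ++ b' ++ c)} ->
  sat_all sp dash (a ++ b ++ c) G -> sat_all sp dash (a ++ b' ++ c) G.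
Proof.
move=> Gm ma mc Einf sat k Gk; apply/satE; have km := Gm k Gk.
rewrite -(sat_atomb_cut (b := b)); first exact/satE/sat.
- exact: leq_trans km ma.
- exact: leq_trans km mc.
- exact: Einf.
Qed.

Section Shortening.
Variables (G : seq (attr_constraint T)) (m W : nat).
Hypothesis Gm : {in G, forall k, size k.2 + 2 <= m}.
Hypothesis GW : size (prefixes (patterns G)) <= W.
Local Notation threshold := ((size G).+1 * (W + m) + m).

Lemma shorten_solution x : threshold <= size x -> sat_all sp dash x G ->
  exists2 x', sat_all sp dash x' G & size x' < size x <= size x' + W.
Proof.
move=> xlong xG.
have Fm : {in patterns G, forall u, size u <= m}.
  move=> _ /mapP [[[pos op] w] /Gm /= wm ->].
  by case: op => /=; rewrite ?size_rcons; lia.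
have xlong' : (size (patterns G)).+1 * (W + m) + m <= size x by rewrite size_map.
have [i [j [/andP [mi ij] jiW jx Einf]]] := infix_cut Fm GW xlong'.
have Ex : take i x ++ drop i (take j x) ++ drop j x = x.
  by rewrite catA cat_take_drop_take ?cat_take_drop // ltnW.
exists (take i x ++ drop j x); last by rewrite size_cat size_takel ?size_drop; lia.
apply: (sat_all_cut (m := m) (a := take i x) (b := drop i (take j x)) (b' := [::])).
- by move=> k Gk; have := Gm Gk; lia.
- by rewrite size_takel; lia.
- by rewrite size_drop; lia.
- by move=> k Gk; rewrite Ex Einf // (map_f _ Gk).
- by rewrite Ex.
Qed.

Lemma solution_in_window t x : threshold <= t -> t < size x -> sat_all sp dash x G ->
  exists x', [/\ sat_all sp dash x' G, size x' <= t & t < size x' + W].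
Proof.
move=> tt; have [n] := ubnP (size x); elim: n x => // n IH x /ltnSE xn tx xG.
have [x' x'G /andP [x'x xx']] := shorten_solution (leq_trans tt (ltnW tx)) xG.
have [x't|tx'] := leqP (size x') t; first by exists x'; split => //; lia.
exact: IH x' (leq_trans x'x xn) tx' x'G.
Qed.

Lemma exists_distinct_solutions K x : threshold + K * W < size x ->
  sat_all sp dash x G ->
  exists ys, [/\ size ys = K, uniq ys &
    forall y, y \in ys -> sat_all sp dash y G /\ size y <= threshold + K * W].
Proof.
move=> + xG; elim: K => [|K IH] xK; first by exists [::].
case: IH => [|ys [ysK ysu ysG]]; first by move: xK; rewrite mulSn; lia.
have [y [yG yt ty]] := solution_in_window (leq_addr (K.+1 * W) threshold) xK xG.
exists (y :: ys); split => /=.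
- by rewrite ysK.
- by rewrite ysu andbT; apply/negP => /ysG [_]; move: ty; rewrite mulSn; lia.
- move=> z; rewrite inE => /predU1P [->|/ysG [zG zs]]; split => //.
  by move: zs; rewrite mulSn; lia.
Qed.

End Shortening.

Section Sizes.
Implicit Types (Gs : seq (seq (attr_constraint T))).

Lemma constraint_size_le k G : k \in G -> constraint_size k <= set_size G.
Proof. by move=> Gk; rewrite /set_size (big_rem k Gk) leq_addr. Qed.

Lemma set_size_lt G Gs : G \in Gs -> set_size G < total_size Gs.
Proof. by move=> GGs; rewrite /total_size (big_rem G GGs) leq_addr. Qed.

Lemma size_le_set_size G : size G <= set_size G.
Proof. by rewrite -sum1_size; apply: leq_sum. Qed.

Lemma size_le_total_size Gs : size Gs <= total_size Gs.
Proof. by rewrite -sum1_size; apply: leq_sum. Qed.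

Lemma size_prefixes_patterns G : size (prefixes (patterns G)) <= (3 * set_size G).+1.
Proof.
rewrite size_prefixes ltnS -map_comp sumnE big_map /set_size big_distrr leq_sum //.
by move=> [[pos op] w] _; case: op; rewrite /constraint_size /= ?size_rcons; lia.
Qed.

Lemma exists_distinct_small_solutions Gs G x : G \in Gs -> sat_all sp dash x G ->
  10 * (total_size Gs).+1 ^ 2 < size x ->
  exists ys, [/\ total_size Gs <= size ys, uniq ys & forall y, y \in ys ->
    sat_all sp dash y G /\ size y <= 10 * (total_size Gs).+1 ^ 2].
Proof.
move=> GGs xG; have Gn := set_size_lt GGs; set n := total_size Gs in Gn * => xlong.
have Gm : {in G, forall k, size k.2 + 2 <= n.+1}.
  by move=> [[pos op] w] /constraint_size_le; rewrite /constraint_size /=; lia.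
have GW : size (prefixes (patterns G)) <= 3 * n.+1.
  by have := size_prefixes_patterns G; lia.
have Gn' : (size G).+1 <= n := leq_ltn_trans (size_le_set_size G) Gn.
have bound : (size G).+1 * (3 * n.+1 + n.+1) + n.+1 + n * (3 * n.+1) <= 10 * n.+1 ^ 2.
  by have := leq_mul Gn' (leqnn (3 * n.+1 + n.+1)); rewrite expnS expn1; nia.
have [|ys [ysn uys ysG]] := exists_distinct_solutions Gm GW (K := n) _ xG; first by lia.
exists ys; split; [by rewrite ysn | done | move=> y /ysG [yG yn]; split => //; lia].
Qed.

End Sizes.

End Constraints.

Theorem mainTheorem4 (Sigma : finType) (sp dash : Sigma) (Hsd : sp != dash) :
  exists c d : nat,
  forall Gs : seq (seq (attr_constraint Sigma)),
  let N := c * (total_size Gs).+1 ^ d in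
  forall S : seq (seq (attr_constraint Sigma)), subseq S Gs ->
    (exists ws, distinct_solution sp dash S ws) ->
    exists ws, distinct_solution sp dash S ws /\
               (forall w, w \in ws -> size w <= N).
Proof.
exists 10, 2 => Gs N S SGs [ws [wsS [uws Pws]]].
have alt : {in S, forall G, has_small_alternatives (fun G x => sat_all sp dash x G)
                              (fun w => size w <= N) (total_size Gs) G}.
  move=> G /(mem_subseq SGs) GGs x xG; rewrite -ltnNge => xlong.
  exact: exists_distinct_small_solutions GGs xG xlong.
have SK : size S <= total_size Gs.
  exact: leq_trans (size_subseq SGs) (size_le_total_size Gs).
have [ws' [wsS' uws' /allP small' Pws']] :=
  small_representatives (pre := [::]) alt SK isT wsS uws Pws.
by exists ws'.
Qed.
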